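(* Let $x\ge 0$ and $y$ be integers with $M(x,y)\neq\emptyset$, and let $G_0$ be a minimal graph in $M(x,y)$. Then (a) $\alpha(G_0)<3$ (so $G_0$ is a $(\mathrm{cl}(G_0)+1,3)$-graph); (b) $|V(G_0)|\le 2\chi(G_0)-1$; (c) $|V(G_0)|\ge 4f(G_0)-2x-1$.
   Context: All graphs are finite, simple and undirected; the empty graph is allowed, with $\chi=\mathrm{cl}=0$. $\mathrm{cl}(G)$ is the clique number, $\alpha(G)$ the independence number, $\chi(G)$ the chromatic number, and $f(G)=\chi(G)-\mathrm{cl}(G)$. A $(p,q)$-graph is a graph $G$ with $\mathrm{cl}(G)<p$ and $\alpha(G)<q$. For integers $x,y$, $M(x,y)=\{G: |V(G)|<\chi(G)+2f(G)-x \text{ and } f(G)\le y\}$. A graph $G_0$ in a nonempty set $\mathcal M$ of graphs is minimal in $\mathcal M$ if $|V(G_0)|=\min\{|V(G)|:G\in\mathcal M\}$. *)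

From HB Require Import structures.
From mathcomp Require Import all_boot all_order all_algebra.
Set Implicit Arguments. Unset Strict Implicit. Unset Printing Implicit Defensive.
Import Order.TTheory GRing.Theory Num.Theory.

Definition simple_graph (T : finType) (e : rel T) : Prop :=
  symmetric e /\ irreflexive e.

Definition is_clique (T : finType) (e : rel T) (A : {set T}) : bool :=
  [forall u in A, forall v in A, (u != v) ==> e u v].

Definition is_stable (T : finType) (e : rel T) (A : {set T}) : bool :=
  [forall u in A, forall v in A, ~~ e u v].

Definition cl (T : finType) (e : rel T) : nat :=
  \max_(A : {set T} | is_clique e A) #|A|.

Definition alpha (T : finType) (e : rel T) : nat :=
  \max_(A : {set T} | is_stable e A) #|A|.

Definition colorable (T : finType) (e : rel T) (k : nat) : bool :=
  [exists c : {ffun T -> 'I_k}, [forall u, forall v, e u v ==> (c u != c v)]].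

(* chromatic number: least k with a proper k-colouring
   (such a k <= #|T| always exists). *)
Definition chi (T : finType) (e : rel T) : nat :=
  find (colorable e) (iota 0 #|T|.+1).

Definition fG (T : finType) (e : rel T) : int := (chi e)%:Z - (cl e)%:Z.

Definition pq_graph (T : finType) (e : rel T) (p q : nat) : bool :=
  (cl e < p)%N && (alpha e < q)%N.

Definition inM (x y : int) (T : finType) (e : rel T) : Prop :=
  simple_graph e /\
  ((#|T|%:Z < (chi e)%:Z + 2 * fG e - x)%R /\ (fG e <= y)%R).

Definition minimal_in_M (x y : int) (T : finType) (e : rel T) : Prop :=
  inM x y e /\
  forall (T' : finType) (e' : rel T'), inM x y e' -> (#|T| <= #|T'|)%N.

From HB Require Import structures.
From mathcomp Require Import all_boot all_order all_algebra.
From mathcomp Require Import zify.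
Import Order.TTheory GRing.Theory Num.Theory.
Set Implicit Arguments. Unset Strict Implicit. Unset Printing Implicit Defensive.

(* Every quantity is computed on vertex subsets A of one
   fixed graph: the chromatic number chi_on A and clique number cl_on A of
   the induced subgraph G[A], and the "excess" 3 chi(A) - 2 cl(A) - |A|, so
   that G[A] lies in M(x,y) exactly when x < excess A and chi(A) - cl(A) <= y.
   Induced subgraphs are realised as genuine graphs on the subtype of A, so a
   minimal G0 in M(x,y) has no proper subset A with x < excess A: the chi-cl
   gap drops by at most one per deleted vertex, so shrinking A until the gap
   is exactly y keeps the excess above x and produces a smaller member of
   M(x,y).  Deleting a stable set S lowers chi by at most one and cl not at
   all, so it lowers the excess by at most 3 - |S|.  With S a maximum stable
   set this gives alpha(G0) < 3; with S a non-edge (G0 is not a clique,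
   since cliques have excess 0) it gives excess(G0) = x + 1; and since
   colour classes have size <= alpha <= 2, |V| <= 2 chi, where equality
   would let us delete a vertex without lowering chi. *)

Lemma find_iota_min (P : pred nat) (N : nat) : P N ->
  P (find P (iota 0 N.+1)) /\ (forall j, P j -> find P (iota 0 N.+1) <= j).
Proof.
move=> PN; have hasP : has P (iota 0 N.+1).
  by apply/hasP; exists N; rewrite ?mem_iota ?add0n ?ltnSn.
have find_lt : find P (iota 0 N.+1) < N.+1.
  by rewrite -[X in _ < X](size_iota 0) -has_find.
split; first by have := nth_find 0 hasP; rewrite nth_iota // add0n.
move=> j Pj; rewrite leqNgt; apply/negP=> j_lt.
have := before_find 0 j_lt; rewrite nth_iota ?add0n ?Pj //.
exact: ltn_trans j_lt find_lt.
Qed.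

Section Colourings.
Variables (T : finType) (e : rel T).

(* A proper colouring of the induced subgraph G[A] with colours < k; the
   colour k is a dump value for vertices outside A (so that k = 0 works). *)
Definition colorable_on (A : {set T}) (k : nat) : bool :=
  [exists c : {ffun T -> 'I_k.+1}, [forall u in A, c u < k] &&
     [forall u in A, forall v in A, e u v ==> (c u != c v)]].

Definition chi_on (A : {set T}) : nat := find (colorable_on A) (iota 0 #|T|.+1).

Lemma colorableP (k : nat) :
  reflect (exists c : T -> nat, (forall u, c u < k) /\
     (forall u v, e u v -> c u <> c v)) (colorable e k).
Proof.
apply: (iffP existsP) => [[c /forallP proper_c]|[c [c_lt proper_c]]].
- exists (fun u => nat_of_ord (c u)); split=> [u|u v euv] //.
  by have /forallP/(_ v)/implyP/(_ euv)/eqP ne := proper_c u; move/val_inj.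
- exists [ffun u => Ordinal (c_lt u)]; apply/forallP=> u; apply/forallP=> v.
  by apply/implyP=> euv; rewrite !ffunE; apply/eqP=> /(congr1 val); apply: proper_c.
Qed.

Lemma colorable_onP (A : {set T}) (k : nat) :
  reflect (exists c : T -> nat, (forall u, u \in A -> c u < k) /\
     (forall u v, u \in A -> v \in A -> e u v -> c u <> c v)) (colorable_on A k).
Proof.
apply: (iffP existsP) => [[c /andP[/forallP c_lt /forallP proper_c]]|[c [c_lt proper_c]]].
- exists (fun u => nat_of_ord (c u)); split=> [u uA|u v uA vA euv].
    by have /implyP := c_lt u; apply.
  have /implyP/(_ uA)/forallP/(_ v)/implyP/(_ vA)/implyP/(_ euv)/eqP ne := proper_c u.
  by move/val_inj.
- have c_le u : u \in A -> c u < k.+1 by move/c_lt/ltnW.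
  exists [ffun u => inord (c u)]; apply/andP; split.
    by apply/forallP=> u; apply/implyP=> uA; rewrite ffunE inordK ?c_lt ?c_le.
  apply/forallP=> u; apply/implyP=> uA; apply/forallP=> v; apply/implyP=> vA.
  apply/implyP=> euv; rewrite !ffunE; apply/eqP=> /(congr1 val).
  by rewrite /= !inordK ?c_le //; apply: proper_c.
Qed.

Lemma colorable_on_mono (A : {set T}) (k k' : nat) :
  k <= k' -> colorable_on A k -> colorable_on A k'.
Proof.
move=> le_kk' /colorable_onP[c [c_lt proper_c]]; apply/colorable_onP.
by exists c; split=> // u uA; apply: leq_trans (c_lt u uA) le_kk'.
Qed.

Hypothesis e_irr : irreflexive e.

Lemma colorable_on_card (A : {set T}) : colorable_on A #|A|.
Proof.
apply/colorable_onP; exists (index^~ (enum A)); split=> [u uA|u v uA vA euv].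
  by rewrite cardE index_mem mem_enum.
move=> eq_index; have uv : u = v by apply: (@index_inj _ u (enum A)); rewrite ?mem_enum.
by rewrite uv e_irr in euv.
Qed.

Lemma chi_on_spec (A : {set T}) :
  colorable_on A (chi_on A) /\ (forall k, colorable_on A k -> chi_on A <= k).
Proof.
apply: find_iota_min; apply: colorable_on_mono (colorable_on_card A).
exact: max_card.
Qed.

Lemma chi_on_le_card (A : {set T}) : chi_on A <= #|A|.
Proof. exact: (chi_on_spec A).2 (colorable_on_card A). Qed.

Lemma chi_on_sub (A B : {set T}) : A \subset B -> chi_on A <= chi_on B.
Proof.
move=> sAB; apply: (chi_on_spec A).2.
have /colorable_onP[c [c_lt proper_c]] := (chi_on_spec B).1.
apply/colorable_onP; exists c.
by split=> [u /(subsetP sAB)|u v /(subsetP sAB) uB /(subsetP sAB)]; auto.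
Qed.

(* Subadditivity: colour A and B with disjoint palettes. *)
Lemma chi_on_setU (A B : {set T}) : chi_on (A :|: B) <= chi_on A + chi_on B.
Proof.
apply: (chi_on_spec _).2.
have /colorable_onP[cA [cA_lt proper_cA]] := (chi_on_spec A).1.
have /colorable_onP[cB [cB_lt proper_cB]] := (chi_on_spec B).1.
apply/colorable_onP; exists (fun u => if u \in A then cA u else chi_on A + cB u).
split=> [u|u v]; rewrite !inE.
  by case: ifP => [uA _|_ /= uB]; [rewrite ltn_addr ?cA_lt | rewrite ltn_add2l cB_lt].
case: ifP => uA; case: ifP => vA //= uB vB euv.
- exact: proper_cA.
- by have := cA_lt u uA => /[swap] ->; rewrite ltnNge leq_addr.
- by have := cA_lt v vA => /[swap] <-; rewrite ltnNge leq_addr.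
- by move/addnI; apply: proper_cB.
Qed.

Lemma chi_on_stable (S : {set T}) : is_stable e S -> chi_on S <= 1.
Proof.
move/forallP=> stS; apply: (chi_on_spec S).2; apply/colorable_onP.
exists (fun=> 0); split=> // u v uS vS euv _.
by have /implyP/(_ uS)/forallP/(_ v)/implyP/(_ vS) := stS u; rewrite euv.
Qed.

Lemma chi_on_remove_stable (A S : {set T}) :
  is_stable e S -> chi_on A <= (chi_on (A :\: S)).+1.
Proof.
move=> stS; rewrite -addn1 -[X in chi_on X](setID A S) setUC.
apply: leq_trans (chi_on_setU _ _) _; rewrite leq_add2l.
exact: leq_trans (chi_on_sub (subsetIr A S)) (chi_on_stable stS).
Qed.

End Colourings.

Section Cliques.
Variables (T : finType) (e : rel T).

Definition cl_on (A : {set T}) : nat :=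
  \max_(B : {set T} | (B \subset A) && is_clique e B) #|B|.

Lemma cliqueP (B : {set T}) :
  reflect (forall u v, u \in B -> v \in B -> u != v -> e u v) (is_clique e B).
Proof.
apply: (iffP forallP) => [cB u v uB vB uv|cB u].
  by have /implyP/(_ uB)/forallP/(_ v)/implyP/(_ vB)/implyP/(_ uv) := cB u.
by apply/implyP=> uB; apply/forallP=> v; apply/implyP=> vB; apply/implyP; apply: cB.
Qed.

Lemma stableP (S : {set T}) :
  reflect (forall u v, u \in S -> v \in S -> ~~ e u v) (is_stable e S).
Proof.
apply: (iffP forallP) => [stS u v uS vS|stS u].
  by have /implyP/(_ uS)/forallP/(_ v)/implyP/(_ vS) := stS u.
by apply/implyP=> uS; apply/forallP=> v; apply/implyP=> vS; apply: stS.
Qed.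

Lemma cl_on_spec (A : {set T}) :
  (exists2 B : {set T}, B \subset A /\ is_clique e B & #|B| = cl_on A) /\
  (forall B : {set T}, B \subset A -> is_clique e B -> #|B| <= cl_on A).
Proof.
split; last by move=> B sBA cB; apply: leq_bigmax_cond; rewrite sBA.
have clique0 : (set0 \subset A) && is_clique e set0.
  by rewrite sub0set; apply/cliqueP=> u v; rewrite inE.
have cliques_in_A : 0 < #|[pred B : {set T} | (B \subset A) && is_clique e B]|.
  by apply/card_gt0P; exists set0.
have [B /andP[sBA cB] max_B] := eq_bigmax_cond (fun B : {set T} => #|B|) cliques_in_A.
by exists B; last exact/esym/max_B.
Qed.

Lemma cl_setT : cl e = cl_on setT.
Proof. by apply: eq_bigl => B; rewrite subsetT. Qed.

Lemma cl_on_sub (A B : {set T}) : A \subset B -> cl_on A <= cl_on B.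
Proof.
move=> sAB; have [[Q [sQA cQ] <-] _] := cl_on_spec A.
by apply: (cl_on_spec B).2 cQ; apply: subset_trans sAB.
Qed.

Hypothesis e_irr : irreflexive e.

(* A clique needs as many colours as it has vertices. *)
Lemma cl_on_le_chi_on (A : {set T}) : cl_on A <= chi_on e A.
Proof.
have [[Q [sQA /cliqueP cQ] <-] _] := cl_on_spec A.
have [/existsP[c /andP[/forallP c_lt /forallP proper_c]] _] := chi_on_spec e_irr A.
have c_inj : {in Q &, injective c}.
  move=> u v uQ vQ cuv; apply/eqP; apply: contraT => /(cQ u v uQ vQ) euv.
  have := proper_c u; rewrite (subsetP sQA u uQ) /=.
  by move=> /forallP/(_ v); rewrite (subsetP sQA v vQ) euv cuv eqxx.
rewrite -(card_in_imset c_inj).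
have : c @: Q \subset [set~ ord_max].
  apply/subsetP=> _ /imsetP[u uQ ->]; rewrite !inE.
  have := c_lt u; rewrite (subsetP sQA u uQ) /=.
  by apply: contraTneq => ->; rewrite ltnn.
by move/subset_leq_card; rewrite cardsC1 card_ord.
Qed.

Lemma stable1 (v : T) : is_stable e [set v].
Proof. by apply/stableP=> u w; rewrite !inE => /eqP-> /eqP->; rewrite e_irr. Qed.

(* A colour class is a stable set, so |A| <= alpha(G) * chi(G[A]). *)
Lemma card_le_alpha_chi_on (A : {set T}) : #|A| <= alpha e * chi_on e A.
Proof.
have [/existsP[c /andP[/forallP c_lt /forallP proper_c]] _] := chi_on_spec e_irr A.
set k := chi_on e A in c c_lt proper_c *.
rewrite -sum1_card (partition_big (fun u => c u) xpredT) //= big_ord_recr /=.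
rewrite [X in _ + X]big1 ?addn0; last first.
  by move=> u /andP[uA /eqP cu]; have := c_lt u; rewrite uA cu /= ltnn.
rewrite mulnC -[X in X * _]card_ord -sum_nat_const leq_sum // => i _.
rewrite (eq_bigl (mem [set u in A | c u == widen_ord (leqnSn k) i])); last first.
  by move=> u; rewrite !inE.
rewrite sum1_card; apply: leq_bigmax_cond; apply/stableP=> u v.
rewrite !inE => /andP[uA /eqP cu] /andP[vA /eqP cv].
have := proper_c u; rewrite uA => /forallP/(_ v); rewrite vA /=.
by apply: contraL => ->; rewrite cu cv eqxx.
Qed.

End Cliques.

Section Embedding.
(* An injective map h : T' -> T onto A preserving and reflecting edges
   identifies the graph (T', e') with the induced subgraph G[A]. *)
Variables (T T' : finType) (e : rel T) (e' : rel T') (h : T' -> T) (A : {set T}).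
Hypotheses (h_inj : injective h) (h_edge : forall u v, e' u v = e (h u) (h v)).
Hypothesis h_onto : A =i codom h.

Lemma card_embed : #|T'| = #|A|.
Proof. by rewrite (eq_card h_onto) (card_codom h_inj). Qed.

Lemma colorable_embed (k : nat) : colorable e' k = colorable_on e A k.
Proof.
have h_in u : h u \in A by rewrite h_onto codom_f.
apply/colorableP/colorable_onP => [[c [c_lt proper_c]]|[c [c_lt proper_c]]].
- exists (fun w => if [pick u | h u == w] is Some u then c u else 0).
  have pick_h u : (if [pick u' | h u' == h u] is Some u' then c u' else 0) = c u.
    by case: pickP => [u' /eqP/h_inj -> //|/(_ u)]; rewrite eqxx.
  split=> [w|w w']; rewrite !h_onto => /codomP[u ->]; rewrite pick_h //.
  by move=> /codomP[v ->]; rewrite pick_h -h_edge; apply: proper_c.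
- exists (c \o h); split=> [u|u v]; first exact: c_lt (h_in u).
  by rewrite h_edge; apply: proper_c.
Qed.

Lemma chi_embed : irreflexive e -> chi e' = chi_on e A.
Proof.
move=> e_irr.
have [col_chi min_chi] :
    colorable e' (chi e') /\ (forall k, colorable e' k -> chi e' <= k).
  by apply: find_iota_min; rewrite colorable_embed card_embed colorable_on_card.
have [col_chi_on min_chi_on] := chi_on_spec e_irr A.
apply/eqP; rewrite eqn_leq min_chi ?colorable_embed //= min_chi_on //.
by rewrite -colorable_embed.
Qed.

Lemma cl_embed : cl e' = cl_on e A.
Proof.
rewrite cl_setT; have [[B' [_ cB'] <-] max_cl'] := cl_on_spec e' setT.
have [[B [sBA cB] <-] max_cl] := cl_on_spec e A.
move/cliqueP: cB' => cB'; move/cliqueP: cB => cB.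
apply/eqP; rewrite eqn_leq; apply/andP; split.
- rewrite -(card_imset _ h_inj); apply: max_cl.
    by apply/subsetP=> _ /imsetP[u _ ->]; rewrite h_onto codom_f.
  apply/cliqueP=> _ _ /imsetP[u uB' ->] /imsetP[v vB' ->] huv.
  by rewrite -h_edge; apply: cB' => //; apply: contraNneq huv => ->.
- have -> : B = h @: (h @^-1: B).
    apply/setP=> w; apply/idP/imsetP=> [wB|[u + ->]]; last by rewrite inE.
    move: (subsetP sBA w wB); rewrite h_onto => /codomP[u eqw].
    by exists u; rewrite ?inE -eqw.
  rewrite (card_imset _ h_inj); apply: max_cl' (subsetT _) _.
  apply/cliqueP=> u v; rewrite !inE h_edge => uB vB uv.
  by apply: cB => //; apply: contraNneq uv => /h_inj ->.
Qed.

End Embedding.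

Lemma chi_setT (T : finType) (e : rel T) : irreflexive e -> chi e = chi_on e setT.
Proof.
have onto : [set: T] =i codom id.
  by move=> u; rewrite in_setT; apply/esym/codomP; exists u.
exact: (@chi_embed T T e e id setT (@inj_id T) (fun u v => erefl) onto).
Qed.

Lemma induced_subgraph (T : finType) (e : rel T) (A : {set T}) : simple_graph e ->
  exists (T' : finType) (e' : rel T'),
    [/\ simple_graph e', #|T'| = #|A|, chi e' = chi_on e A & cl e' = cl_on e A].
Proof.
move=> [e_sym e_irr].
pose e' := [rel u v : {u | u \in A} | e (val u) (val v)].
have onto : A =i codom (val : {u | u \in A} -> T) by move=> w; rewrite codom_val.
exists {u | u \in A}, e'; split.
- by split=> [u v|u]; rewrite /= ?e_irr // e_sym.
- exact: (card_embed val_inj onto).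
- exact: (chi_embed val_inj _ onto).
- exact: (cl_embed val_inj _ onto).
Qed.

Section Excess.
Variables (T : finType) (e : rel T).
Hypothesis e_irr : irreflexive e.

(* excess A = chi + 2 (chi - cl) - |A| for G[A]; G[A] is in M(x,y) iff
   x < excess A and chi(G[A]) - cl(G[A]) <= y. *)
Definition excess (A : {set T}) : int :=
  (3 * (chi_on e A)%:Z - 2 * (cl_on e A)%:Z - #|A|%:Z)%R.

Definition inM_on (x y : int) (A : {set T}) : Prop :=
  (x < excess A)%R /\ ((chi_on e A)%:Z - (cl_on e A)%:Z <= y)%R.

(* Deleting S from A loses |S| vertices and no clique vertex count, so the
   excess drops by at most 3 (chi(A) - chi(A \ S)) - |S|. *)
Lemma excess_remove (A S : {set T}) : S \subset A ->
  (excess A + #|S|%:Z + 3 * (chi_on e (A :\: S))%:Z <=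
   excess (A :\: S) + 3 * (chi_on e A)%:Z)%R.
Proof.
move=> sSA; have := cl_on_sub e (subsetDl A S).
by have := cardsID S A; rewrite (setIidPr sSA) /excess; lia.
Qed.

(* For a stable S, chi drops by at most one, so the excess drops by at most
   3 - |S|. *)
Lemma excess_remove_stable (A S : {set T}) : S \subset A -> is_stable e S ->
  (excess A + #|S|%:Z <= excess (A :\: S) + 3)%R.
Proof.
move=> sSA stS; have := excess_remove sSA.
by have := chi_on_remove_stable e_irr A stS; lia.
Qed.

(* On a clique chi = cl = |A|, hence excess A <= 0. *)
Lemma excess_clique (A : {set T}) : is_clique e A -> (excess A <= 0)%R.
Proof.
move=> cA; have := (cl_on_spec e A).2 A (subxx A) cA.
by have := chi_on_le_card e_irr A; rewrite /excess; lia.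
Qed.

(* Discrete intermediate values: removing one vertex lowers the gap
   chi - cl by at most one, so every gap value below the gap of A is the
   gap of some induced subgraph of G[A]. *)
Lemma gap_subset (t : nat) (A : {set T}) : t + cl_on e A <= chi_on e A ->
  exists2 B : {set T}, B \subset A & chi_on e B = t + cl_on e B.
Proof.
elim: {A}_.+1 {-2}A (ltnSn #|A|) => // n IHn A card_A gap_A.
have [eq_gap|lt_gap] := eqVneq (chi_on e A) (t + cl_on e A); first by exists A.
have [A0|[v vA]] := set_0Vmem A.
  by move: gap_A lt_gap; have := chi_on_le_card e_irr A; rewrite A0 cards0; lia.
have card_Av : #|A :\ v| < n by move: card_A; rewrite (cardsD1 v A) vA.
have [|B sBAv eq_gap] := IHn (A :\ v) card_Av.
  have := chi_on_remove_stable e_irr A (stable1 e_irr v).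
  have := cl_on_sub e (subsetDl A [set v]); move: gap_A lt_gap; lia.
by exists B => //; apply: subset_trans sBAv (subsetDl A _).
Qed.

Lemma inM_on_setT (x y : int) : inM x y e -> inM_on x y setT.
Proof.
move=> [[_ irr] [size_x gap_y]]; move: size_x gap_y.
by rewrite /inM_on /excess /fG (chi_setT irr) cl_setT cardsT; lia.
Qed.

Lemma inM_on_induced (x y : int) (A : {set T}) : simple_graph e -> inM_on x y A ->
  exists (T' : finType) (e' : rel T'), inM x y e' /\ #|T'| = #|A|.
Proof.
move=> simple_e [size_x gap_y].
have [T' [e' [simple_e' card_T' chi_T' cl_T']]] := induced_subgraph A simple_e.
exists T', e'; split=> //; split=> //.
by move: size_x gap_y; rewrite /excess /fG chi_T' cl_T' card_T'; lia.
Qed.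

(* If G is in M(x,y), any A with x < excess A contains a member of M(x,y):
   shrink A until its gap equals y; since |B| - chi(B) <= |V| - chi(V) and
   |V| + x < chi(V) + 2 y, the excess of the result stays above x. *)
Lemma inM_on_descend (x y : int) (A : {set T}) : inM_on x y setT ->
  (x < excess A)%R -> exists2 B : {set T}, B \subset A & inM_on x y B.
Proof.
move=> [size_x gap_y] excess_A.
have [gap_A|lt_gap_A] := lerP ((chi_on e A)%:Z - (cl_on e A)%:Z) y; first by exists A.
have := cl_on_le_chi_on e_irr setT; case: y gap_y lt_gap_A => [t|t]; last by lia.
move=> gap_t lt_gap_A _.
have [|B sBA gap_B] := gap_subset (A := A) (t := t); first by lia.
exists B => //; split; last by rewrite gap_B; lia.
have := chi_on_setU e_irr B (~: B); rewrite setUCr.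
have := chi_on_le_card e_irr (~: B); have := cardsC B.
by move: size_x gap_t; rewrite /excess cardsT gap_B; lia.
Qed.

End Excess.

Section MinimalGraph.
Variables (x y : int) (T : finType) (e : rel T).
Hypothesis G_min : minimal_in_M x y e.

Let e_simple : simple_graph e := G_min.1.1.
Let e_irr : irreflexive e := e_simple.2.

Lemma excess_setT_gt : (x < excess e setT)%R.
Proof. exact: (inM_on_setT G_min.1).1. Qed.

Lemma proper_excess_le (A : {set T}) : A \proper setT -> (excess e A <= x)%R.
Proof.
move=> ltA; rewrite leNgt; apply/negP=> /(inM_on_descend e_irr (inM_on_setT G_min.1)).
move=> [B sBA /(inM_on_induced e_simple)[T' [e' [inM_e' card_T']]]].
have := G_min.2 T' e' inM_e'; rewrite card_T' leqNgt -cardsT.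
by rewrite (leq_ltn_trans (subset_leq_card sBA) (proper_card ltA)).
Qed.

(* Deleting a nonempty stable set S leaves a proper subgraph, whose excess
   is at most x; so the excess of G0 is at most x + 3 - |S|. *)
Lemma remove_stable_excess (S : {set T}) : is_stable e S -> S != set0 ->
  (excess e setT + #|S|%:Z <= x + 3)%R.
Proof.
move=> stS S_ne0; have := excess_remove_stable e_irr (subsetT S) stS.
have : setT :\: S \proper setT.
  by rewrite properT setTD -setC0 (inj_eq (@setC_inj _)).
by move/proper_excess_le; lia.
Qed.

(* (a): a maximum stable set of size >= 3 could be deleted. *)
Lemma alpha_lt3 : alpha e < 3.
Proof.
have stable0 : is_stable e set0 by apply/stableP=> u v; rewrite inE.
have stable_ex : 0 < #|[pred S : {set T} | is_stable e S]|.
  by apply/card_gt0P; exists set0.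
have [S stS max_S] := eq_bigmax_cond (fun S : {set T} => #|S|) stable_ex.
rewrite /alpha max_S ltnNge; apply/negP=> card_S.
have S_ne0 : S != set0 by rewrite -card_gt0; apply: leq_trans card_S.
by have := remove_stable_excess stS S_ne0; have := excess_setT_gt; lia.
Qed.

(* Together with excess_setT_gt, the excess of G0 is exactly x + 1: G0 is not
   a clique (excess 0 <= x), and deleting a non-edge {u, v} gives the bound. *)
Lemma excess_setT_le : (0 <= x)%R -> (excess e setT <= x + 1)%R.
Proof.
move=> x_ge0.
case: (boolP (is_clique e setT)) => [/(excess_clique e_irr)|]; first by lia.
rewrite /is_clique negb_forall => /existsP[u]; rewrite negb_imply in_setT /=.
rewrite negb_forall => /existsP[v]; rewrite negb_imply in_setT negb_imply /=.
move=> /andP[uv not_euv].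
have stS : is_stable e [set u; v].
  apply/stableP=> a b; rewrite !inE => /orP[]/eqP-> /orP[]/eqP->;
    by rewrite ?e_irr // e_simple.1.
have S_ne0 : [set u; v] != set0 by apply/set0Pn; exists u; rewrite !inE eqxx.
have := remove_stable_excess stS S_ne0; rewrite cards2 uv.
by have := excess_setT_gt; lia.
Qed.

(* (b): colour classes have size <= alpha <= 2, and if |V| = 2 chi, deleting a
   vertex keeps chi, raising the excess of a proper subgraph above x. *)
Lemma card_lt_2chi : (0 <= x)%R -> #|T| < 2 * chi_on e setT.
Proof.
move=> x_ge0.
have le2chi (A : {set T}) : #|A| <= 2 * chi_on e A.
  have alpha_le2 : alpha e <= 2 := alpha_lt3.
  exact: leq_trans (card_le_alpha_chi_on e_irr A) (leq_mul alpha_le2 (leqnn _)).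
have := le2chi setT; rewrite cardsT leq_eqVlt => /orP[/eqP card_T|] //.
have T_ne0 : 0 < #|T|.
  have := excess_setT_gt; have := cl_on_le_chi_on e_irr setT.
  by rewrite /excess cardsT; lia.
have [v _] : exists v, v \in [set: T] by apply/card_gt0P; rewrite cardsT.
have := proper_excess_le (properD1 (in_setT v)); have := excess_setT_gt.
have := excess_remove e (subsetT [set v]); have := le2chi (setT :\ v).
have := cardsD1 v setT; have := chi_on_sub e_irr (subsetT (setT :\ v)).
by rewrite /excess !cardsT cards1 in_setT; lia.
Qed.

End MinimalGraph.

Theorem lemma3p2 (x y : int) (T : finType) (e : rel T) :
  (0 <= x)%R ->
  (exists (T' : finType) (e' : rel T'), inM x y e') ->
  minimal_in_M x y e ->
  [/\ (alpha e < 3)%N /\ pq_graph e (cl e).+1 3,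
      (#|T|%:Z <= 2 * (chi e)%:Z - 1)%R
    & (4 * fG e - 2 * x - 1 <= #|T|%:Z)%R].
Proof.
move=> x_ge0 _ G_min; have e_irr : irreflexive e := G_min.1.1.2.
have alpha_small := alpha_lt3 G_min.
have card_small := card_lt_2chi G_min x_ge0.
have excess_gt := excess_setT_gt G_min.
have excess_le := excess_setT_le G_min x_ge0.
move: card_small excess_gt excess_le; clear G_min.
rewrite /pq_graph alpha_small /fG /excess (chi_setT e_irr) cl_setT cardsT ltnSn.
by split=> //; lia.
Qed.
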